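(* Let $x<y$ be real numbers. For every convex function $f:[x,y]\to\mathbb{R}$ the following inequalities are satisfied: $$\frac{3}{(y-x)^2}\int_x^y\int_x^y f\left(\frac{s+t}{2}\right)ds\,dt\leq\frac{2}{y-x}\int_x^y f(t)\,dt+f\left(\frac{x+y}{2}\right)$$ and $$\frac{4}{y-x}\int_x^y f(t)\,dt\leq\frac{3}{(y-x)^2}\int_x^y\int_x^y f\left(\frac{s+t}{2}\right)ds\,dt+\frac{f(x)+f(y)}{2}.$$ *)

From Stdlib Require Import Reals.
From Coquelicot Require Import Coquelicot.
Open Scope R_scope.

(* f is convex on the closed interval [x, y]. Only the values of f on [x,y]
   matter for the statement. *)
Definition convex_on (x y : R) (f : R -> R) : Prop :=
  forall a b l : R, x <= a <= y -> x <= b <= y -> 0 <= l <= 1 ->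
    f (l * a + (1 - l) * b) <= l * f a + (1 - l) * f b.

Definition double_mid_int (x y : R) (f : R -> R) : R :=
  RInt (fun t => RInt (fun s => f ((s + t) / 2)) x y) x y.

From Stdlib Require Import Reals Lra Classical.
From Coquelicot Require Import Coquelicot.
Open Scope R_scope.

(* A convex function is continuous inside [x, y] and has one-sided limits at the
   ends, so on the open interval it agrees with a function g continuous on R; the
   integrals do not see the endpoints.  Through the first two antiderivatives of g,
   the double integral is the integral of g against the triangular density, and each
   inequality becomes a bound on the integral of g against a weight that is affine on
   each half of [x, y].  On a half, the weight changes sign at one end of a chord of f
   and has its barycentre at the other end.  As f lies below the chord between its
   ends and above it outside, f times the weight is at most the chord times the
   weight, whose integral is the value of f at the barycentre times the mass. *)

Definition slope (f : R -> R) (a b : R) : R := (f b - f a) / (b - a).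

Lemma slope_comm f a b : slope f a b = slope f b a.
Proof. unfold slope, Rdiv. rewrite <- (Ropp_minus_distr b a), Rinv_opp. ring. Qed.

Lemma slope_le_cross f a b c d : a < b -> c < d ->
  (f b - f a) * (d - c) <= (f d - f c) * (b - a) -> slope f a b <= slope f c d.
Proof.
intros Hab Hcd H. unfold slope.
apply (Rmult_le_reg_r ((b - a) * (d - c))); [nra |].
replace ((f b - f a) / (b - a) * ((b - a) * (d - c))) with ((f b - f a) * (d - c)) by (field; lra).
replace ((f d - f c) / (d - c) * ((b - a) * (d - c))) with ((f d - f c) * (b - a)) by (field; lra).
exact H.
Qed.

Lemma nondecreasing_lim_at_right (h : R -> R) (a b lo : R) :
  a < b -> (forall u v, a < u -> u <= v -> v < b -> h u <= h v) ->
  (forall u, a < u < b -> lo <= h u) ->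
  exists l, filterlim h (at_right a) (locally l).
Proof.
intros Hab Hmono Hlo.
set (E := fun r => exists u, a < u < b /\ r = - h u).
assert (HE : bound E) by (exists (- lo); intros r [u [Hu ->]]; specialize (Hlo u Hu); lra).
assert (HE0 : exists r, E r) by (exists (- h ((a + b) / 2)), ((a + b) / 2); split; [lra | easy]).
destruct (completeness E HE HE0) as [s [Hub Hlub]].
exists (- s). apply filterlim_locally. intros [eps Heps].
assert (Hnear : exists u0, a < u0 < b /\ h u0 < - s + eps).
{ apply NNPP. intros Hno. enough (s <= s - eps) by lra.
  apply Hlub. intros r [u [Hu ->]].
  destruct (Rlt_dec (h u) (- s + eps)); [exfalso; apply Hno; now exists u | lra]. }
destruct Hnear as [u0 [Hu0 Hh0]].
exists (mkposreal (u0 - a) ltac:(lra)). intros u Hu Hau. change (Rabs (u - a) < u0 - a) in Hu.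
apply Rabs_def2 in Hu. change (Rabs (h u - - s) < eps).
assert (- h u <= s) by (apply Hub; exists u; split; [lra | easy]).
pose proof (Hmono u u0 Hau ltac:(lra) ltac:(lra)).
apply Rabs_def1; lra.
Qed.

Lemma lipschitz_at_continuous (h : R -> R) (c d K : R) : 0 < d -> 0 <= K ->
  (forall u, Rabs (u - c) < d -> Rabs (h u - h c) <= K * Rabs (u - c)) ->
  filterlim h (locally c) (locally (h c)).
Proof.
intros Hd HK Hlip. apply filterlim_locally. intros [eps Heps].
assert (Hd' : 0 < Rmin d (eps / (K + 1))) by (apply Rmin_pos; [lra | apply Rdiv_lt_0_compat; lra]).
exists (mkposreal _ Hd'). intros u Hu. change (Rabs (u - c) < Rmin d (eps / (K + 1))) in Hu.
change (Rabs (h u - h c) < eps).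
pose proof (Rmin_l d (eps / (K + 1))). pose proof (Rmin_r d (eps / (K + 1))).
apply (Rle_lt_trans _ (K * Rabs (u - c))); [apply Hlip; lra |].
apply (Rle_lt_trans _ (K * (eps / (K + 1)))); [apply Rmult_le_compat_l; lra |].
apply (Rmult_lt_reg_r (K + 1)); [lra |]. field_simplify; nra.
Qed.

Section Convex.
Variables (x y : R) (f : R -> R).
Hypothesis Hf : convex_on x y f.

Lemma convex_on_secant a b c : x <= a -> a <= b -> b <= c -> c <= y -> a < c ->
  f b * (c - a) <= f a * (c - b) + f c * (b - a).
Proof.
intros Ha Hab Hbc Hc Hac.
set (l := (c - b) / (c - a)).
assert (Hl : 0 <= l <= 1).
{ unfold l; split; [apply Rdiv_le_0_compat; lra |].
  apply Rle_div_l; lra. }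
assert (Hb : l * a + (1 - l) * c = b) by (unfold l; field; lra).
pose proof (Hf a c l ltac:(lra) ltac:(lra) Hl) as Hconv. rewrite Hb in Hconv.
assert (l * (c - a) = c - b) by (unfold l; field; lra).
nra.
Qed.

Lemma convex_on_slope_le a b c : x <= a -> a < b -> b < c -> c <= y ->
  slope f a b <= slope f a c /\ slope f a c <= slope f b c.
Proof.
intros Ha Hab Hbc Hc. pose proof (convex_on_secant a b c) as Hs.
split; apply slope_le_cross; nra.
Qed.

Lemma convex_on_reflect : convex_on x y (fun u => f (x + y - u)).
Proof.
intros a b l Ha Hb Hl.
replace (x + y - (l * a + (1 - l) * b)) with (l * (x + y - a) + (1 - l) * (x + y - b)) by ring.
apply Hf; lra.
Qed.

Lemma convex_on_abs_sub_le c u : x < c < y -> x < u < y ->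
  Rabs (f u - f c) <= (Rabs (slope f x c) + Rabs (slope f c y)) * Rabs (u - c).
Proof.
intros Hc Hu.
assert (Hbetween : u <> c -> slope f x c <= slope f c u <= slope f c y).
{ intros Huc. destruct (Rlt_dec u c).
  - rewrite (slope_comm f c u).
    destruct (convex_on_slope_le x u c) as [_ H1], (convex_on_slope_le u c y) as [H2 H3]; lra.
  - destruct (convex_on_slope_le x c u) as [H1 H2], (convex_on_slope_le c u y) as [H3 _]; lra. }
destruct (Req_dec u c) as [-> | Huc].
{ rewrite !Rminus_diag, Rabs_R0. nra. }
specialize (Hbetween Huc).
replace (f u - f c) with (slope f c u * (u - c)) by (unfold slope; field; lra).
rewrite Rabs_mult. apply Rmult_le_compat_r; [apply Rabs_pos |].
apply Rabs_le. pose proof (Rle_abs (slope f c y)). pose proof (Rle_abs (- slope f x c)).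
pose proof (Rabs_pos (slope f c y)). pose proof (Rabs_pos (slope f x c)).
rewrite Rabs_Ropp in *. lra.
Qed.

Lemma convex_on_continuous c : x < c < y -> filterlim f (locally c) (locally (f c)).
Proof.
intros Hc. apply (lipschitz_at_continuous f c (Rmin (c - x) (y - c))
  (Rabs (slope f x c) + Rabs (slope f c y))).
- apply Rmin_pos; lra.
- pose proof (Rabs_pos (slope f x c)). pose proof (Rabs_pos (slope f c y)). lra.
- intros u Hu. apply convex_on_abs_sub_le; [easy |].
  pose proof (Rmin_l (c - x) (y - c)). pose proof (Rmin_r (c - x) (y - c)).
  apply Rabs_def2 in Hu. lra.
Qed.

Hypothesis Hxy : x < y.

Lemma convex_on_lim_at_right : exists l, filterlim f (at_right x) (locally l).
Proof.
set (m := (x + y) / 2).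
destruct (nondecreasing_lim_at_right (fun u => slope f u m) x m (slope f x m)) as [l Hl].
- unfold m; lra.
- intros u v Hu Huv Hv. destruct (Req_dec u v) as [<- | Hne]; [lra |].
  apply (convex_on_slope_le u v m); unfold m in *; lra.
- intros u Hu. apply (convex_on_slope_le x u m); unfold m in *; lra.
- exists (f m + (x - m) * l).
  apply (filterlim_ext_loc (fun u => f m + (u - m) * slope f u m)).
  { exists (mkposreal (m - x) ltac:(unfold m; lra)). intros u Hu Hxu.
    change (Rabs (u - x) < m - x) in Hu. apply Rabs_def2 in Hu.
    unfold slope. field. lra. }
  apply (filterlim_comp_2 (G := locally (f m)) (H := locally ((x - m) * l))
    (fun _ => f m) (fun u => (u - m) * slope f u m) Rplus).
  + apply filterlim_const.
  + apply (filterlim_comp_2 (G := locally (x - m)) (H := locally l)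
      (fun u => u - m) (fun u => slope f u m) Rmult); [| exact Hl |].
    * apply (filterlim_filter_le_1 _ (filter_le_within _)).
      apply (continuous_minus (fun u => u) (fun _ => m)); [apply continuous_id | apply continuous_const].
    * apply (filterlim_mult (K := R_AbsRing)).
  + apply (filterlim_plus (V := R_NormedModule)).
Qed.

End Convex.

Lemma filterlim_reflect_at_left (a b : R) :
  filterlim (fun u => a + b - u) (at_left b) (at_right a).
Proof.
intros P [d Hd]. exists d. intros u Hu Hub. apply Hd; [| lra].
change (Rabs (a + b - u - a) < d). change (Rabs (u - b) < d) in Hu.
now replace (a + b - u - a) with (- (u - b)) by ring; rewrite Rabs_Ropp.
Qed.

Lemma convex_on_lim_at_left x y f : convex_on x y f -> x < y ->
  exists l, filterlim f (at_left y) (locally l).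
Proof.
intros Hf Hxy.
destruct (convex_on_lim_at_right x y _ (convex_on_reflect x y f Hf) Hxy) as [l Hl].
exists l. apply (filterlim_ext (fun u => f (x + y - (x + y - u)))).
{ intros u. f_equal. ring. }
exact (filterlim_comp _ _ _ (fun u => x + y - u) (fun u => f (x + y - u)) _ _ _
  (filterlim_reflect_at_left x y) Hl).
Qed.

Lemma convex_on_continuous_extension x y f : convex_on x y f -> x < y ->
  exists g, (forall u, x < u < y -> g u = f u) /\ (forall u, continuous g u).
Proof.
intros Hf Hxy.
destruct (convex_on_lim_at_right x y f Hf Hxy) as [lx Hlx].
destruct (convex_on_lim_at_left x y f Hf Hxy) as [ly Hly].
destruct (C0_extension_lt f lx ly x y Hxy (convex_on_continuous x y f Hf) Hlx Hly)
  as [g [Hg [Hgf _]]].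
now exists g.
Qed.

Definition prim (g : R -> R) (x v : R) : R := RInt g x v.
Definition prim2 (g : R -> R) (x v : R) : R := RInt (prim g x) x v.

Section Antiderivatives.
Variables (g : R -> R) (x : R).
Hypothesis Hg : forall u, continuous g u.

Lemma is_derive_prim v : is_derive (prim g x) v (g v).
Proof.
apply is_derive_RInt with (a := x); [| apply Hg].
apply filter_forall. intros b. apply (RInt_correct (V := R_CompleteNormedModule)).
apply (ex_RInt_continuous (V := R_CompleteNormedModule)). intros; apply Hg.
Qed.

Lemma continuous_prim v : continuous (prim g x) v.
Proof. apply (ex_derive_continuous (V := R_NormedModule)). eexists; apply is_derive_prim. Qed.

Lemma is_derive_prim2 v : is_derive (prim2 g x) v (prim g x v).
Proof.
apply is_derive_RInt with (a := x); [| apply continuous_prim].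
apply filter_forall. intros b. apply (RInt_correct (V := R_CompleteNormedModule)).
apply (ex_RInt_continuous (V := R_CompleteNormedModule)). intros; apply continuous_prim.
Qed.

Lemma ex_derive_prim v : ex_derive (prim g x) v.
Proof. eexists; apply is_derive_prim. Qed.

Lemma ex_derive_prim2 v : ex_derive (prim2 g x) v.
Proof. eexists; apply is_derive_prim2. Qed.

Lemma Derive_prim v : Derive (fun u => prim g x u) v = g v.
Proof. apply is_derive_unique, is_derive_prim. Qed.

Lemma Derive_prim2 v : Derive (fun u => prim2 g x u) v = prim g x v.
Proof. apply is_derive_unique, is_derive_prim2. Qed.

Lemma prim_self : prim g x x = 0.
Proof. apply (RInt_point (V := R_CompleteNormedModule)). Qed.

Lemma prim2_self : prim2 g x x = 0.
Proof. apply (RInt_point (V := R_CompleteNormedModule)). Qed.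

Lemma RInt_mul_affine k r a b :
  RInt (fun u => g u * (k * (u - r))) a b =
  (k * (b - r) * prim g x b - k * prim2 g x b) - (k * (a - r) * prim g x a - k * prim2 g x a).
Proof.
apply is_RInt_unique.
apply (is_RInt_derive (fun u => k * (u - r) * prim g x u - k * prim2 g x u)).
- intros u _. auto_derive.
  + repeat split; auto using ex_derive_prim, ex_derive_prim2.
  + rewrite Derive_prim, Derive_prim2. ring.
- intros u _. apply (continuous_mult g (fun u => k * (u - r))); [apply Hg |].
  apply (ex_derive_continuous (V := R_NormedModule)). now auto_derive.
Qed.

Lemma RInt_comp_midpoint a b t :
  RInt (fun s => g ((s + t) / 2)) a b = 2 * prim g x ((b + t) / 2) - 2 * prim g x ((a + t) / 2).
Proof.
apply is_RInt_unique.
apply (is_RInt_derive (fun s => 2 * prim g x ((s + t) / 2))).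
- intros u _. auto_derive; [apply ex_derive_prim |].
  rewrite Derive_prim. unfold Rdiv. field.
- intros u _. apply (continuous_comp (fun s => (s + t) / 2) g); [| apply Hg].
  apply (ex_derive_continuous (V := R_NormedModule)). now auto_derive.
Qed.

Lemma double_mid_int_prim2 y :
  double_mid_int x y g = 4 * (prim2 g x y - 2 * prim2 g x ((x + y) / 2)).
Proof.
unfold double_mid_int.
rewrite (RInt_ext _ (fun t => 2 * prim g x ((y + t) / 2) - 2 * prim g x ((x + t) / 2)))
  by (intros t _; apply RInt_comp_midpoint).
set (F := fun t => 4 * prim2 g x ((y + t) / 2) - 4 * prim2 g x ((x + t) / 2)).
assert (HF : forall u, is_derive F u (2 * prim g x ((y + u) / 2) - 2 * prim g x ((x + u) / 2))).
{ intros u. unfold F. auto_derive.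
  - repeat split; apply ex_derive_prim2.
  - rewrite !Derive_prim2. unfold Rdiv. field. }
rewrite (is_RInt_unique _ x y (F y - F x)).
- unfold F. replace ((y + y) / 2) with y by field. replace ((x + x) / 2) with x by field.
  replace ((y + x) / 2) with ((x + y) / 2) by field. rewrite prim2_self. ring.
- apply (is_RInt_derive (V := R_CompleteNormedModule) F); intros u _; [apply HF |].
  apply (ex_derive_continuous (V := R_NormedModule)). auto_derive.
  repeat split; apply ex_derive_prim.
Qed.

Lemma double_mid_int_mid_split y :
  3 * double_mid_int x y g - 2 * (y - x) * RInt g x y =
  RInt (fun u => g u * (12 * (u - (5 * x + y) / 6))) x ((x + y) / 2) +
  RInt (fun u => g u * (-12 * (u - (x + 5 * y) / 6))) ((x + y) / 2) y.
Proof.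
rewrite double_mid_int_prim2, !RInt_mul_affine, prim_self, prim2_self.
change (RInt g x y) with (prim g x y). field.
Qed.

Lemma double_mid_int_end_split y :
  4 * (y - x) * RInt g x y - 3 * double_mid_int x y g =
  RInt (fun u => g u * (-12 * (u - (2 * x + y) / 3))) x ((x + y) / 2) +
  RInt (fun u => g u * (12 * (u - (x + 2 * y) / 3))) ((x + y) / 2) y.
Proof.
rewrite double_mid_int_prim2, !RInt_mul_affine, prim_self, prim2_self.
change (RInt g x y) with (prim g x y). field.
Qed.

End Antiderivatives.

Definition chord (f : R -> R) (p q u : R) : R :=
  (f p * q - f q * p) / (q - p) + (f q - f p) / (q - p) * u.

Lemma RInt_affine_mul c0 c1 k r a b :
  RInt (fun u => (c0 + c1 * u) * (k * (u - r))) a b =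
  k * ((c1 * b ^ 3 / 3 + (c0 - c1 * r) * b ^ 2 / 2 - c0 * r * b)
     - (c1 * a ^ 3 / 3 + (c0 - c1 * r) * a ^ 2 / 2 - c0 * r * a)).
Proof.
apply is_RInt_unique.
set (F := fun u => k * (c1 * u ^ 3 / 3 + (c0 - c1 * r) * u ^ 2 / 2 - c0 * r * u)).
replace (k * _) with (F b - F a) by (unfold F; ring).
apply (is_RInt_derive (V := R_CompleteNormedModule)); intros u _; unfold F.
- auto_derive; [easy | field].
- apply (ex_derive_continuous (V := R_NormedModule)). now auto_derive.
Qed.

Section Chord.
Variables (x y : R) (f : R -> R).
Hypothesis Hf : convex_on x y f.

Lemma convex_on_chord_sign p q u : x <= p -> p < q -> q <= y -> x <= u <= y ->
  (f u - chord f p q u) * ((u - p) * (q - u)) <= 0.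
Proof.
intros Hp Hpq Hq Hu.
apply (Rmult_le_reg_r (q - p)); [lra |]. rewrite Rmult_0_l.
replace (_ * (q - p)) with ((f u * (q - p) - (f p * (q - u) + f q * (u - p))) * ((u - p) * (q - u)))
  by (unfold chord; field; lra).
destruct (Rlt_le_dec u p) as [Hup | Hpu]; [| destruct (Rle_lt_dec u q) as [Huq | Hqu]].
- pose proof (convex_on_secant x y f Hf u p q ltac:(lra) ltac:(lra) ltac:(lra) ltac:(lra) ltac:(lra)).
  assert ((u - p) * (q - u) <= 0) by nra. nra.
- pose proof (convex_on_secant x y f Hf p u q ltac:(lra) ltac:(lra) ltac:(lra) ltac:(lra) ltac:(lra)).
  assert (0 <= (u - p) * (q - u)) by nra. nra.
- pose proof (convex_on_secant x y f Hf p q u ltac:(lra) ltac:(lra) ltac:(lra) ltac:(lra) ltac:(lra)).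
  assert ((u - p) * (q - u) <= 0) by nra. nra.
Qed.

Lemma convex_on_chord_weight p q u w : x <= p -> p < q -> q <= y -> x <= u <= y ->
  0 <= w * ((u - p) * (q - u)) -> f u * w <= chord f p q u * w.
Proof.
intros Hp Hpq Hq Hu Hw.
pose proof (convex_on_chord_sign p q u Hp Hpq Hq Hu) as Hsign.
destruct (Req_dec ((u - p) * (q - u)) 0) as [H0 | H0].
- assert (Hchord : chord f p q u = f u).
  { apply Rmult_integral in H0.
    destruct H0; [replace u with p by lra | replace u with q by lra]; unfold chord; field; lra. }
  rewrite Hchord. lra.
- assert (0 < ((u - p) * (q - u)) ^ 2) by (apply pow2_gt_0; exact H0). nra.
Qed.

Variable g : R -> R.
Hypothesis Hg : forall u, continuous g u.
Hypothesis Hgf : forall u, x < u < y -> g u = f u.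

Lemma RInt_weight_le_chord a b p q k r : x <= a -> a <= b -> b <= y -> x <= p -> p < q -> q <= y ->
  (forall u, a < u < b -> 0 <= k * (u - r) * ((u - p) * (q - u))) ->
  RInt (fun u => g u * (k * (u - r))) a b <= RInt (fun u => chord f p q u * (k * (u - r))) a b.
Proof.
intros Ha Hab Hb Hp Hpq Hq Hw. apply RInt_le; [easy | | |].
- apply (ex_RInt_continuous (V := R_CompleteNormedModule)). intros u _.
  apply (continuous_mult g (fun u => k * (u - r))); [apply Hg |].
  apply (ex_derive_continuous (V := R_NormedModule)). now auto_derive.
- apply (ex_RInt_continuous (V := R_CompleteNormedModule)). intros u _.
  apply (ex_derive_continuous (V := R_NormedModule)). unfold chord. now auto_derive.
- intros u Hu. rewrite Hgf by lra. apply convex_on_chord_weight; try lra. now apply Hw.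
Qed.

Hypothesis Hxy : x < y.

Lemma RInt_mid_weights_le :
  RInt (fun u => g u * (12 * (u - (5 * x + y) / 6))) x ((x + y) / 2) +
  RInt (fun u => g u * (-12 * (u - (x + 5 * y) / 6))) ((x + y) / 2) y
  <= (y - x) ^ 2 * f ((x + y) / 2).
Proof.
apply Rle_trans with
  (RInt (fun u => chord f ((5 * x + y) / 6) ((x + y) / 2) u * (12 * (u - (5 * x + y) / 6)))
     x ((x + y) / 2) +
   RInt (fun u => chord f ((x + y) / 2) ((x + 5 * y) / 6) u * (-12 * (u - (x + 5 * y) / 6)))
     ((x + y) / 2) y).
- apply Rplus_le_compat; apply RInt_weight_le_chord; try lra; intros u Hu.
  + pose proof (pow2_ge_0 (u - (5 * x + y) / 6)). nra.
  + pose proof (pow2_ge_0 (u - (x + 5 * y) / 6)). nra.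
- unfold chord. rewrite !RInt_affine_mul. right. field. lra.
Qed.

Lemma RInt_end_weights_le :
  RInt (fun u => g u * (-12 * (u - (2 * x + y) / 3))) x ((x + y) / 2) +
  RInt (fun u => g u * (12 * (u - (x + 2 * y) / 3))) ((x + y) / 2) y
  <= (y - x) ^ 2 * ((f x + f y) / 2).
Proof.
apply Rle_trans with
  (RInt (fun u => chord f x ((2 * x + y) / 3) u * (-12 * (u - (2 * x + y) / 3)))
     x ((x + y) / 2) +
   RInt (fun u => chord f ((x + 2 * y) / 3) y u * (12 * (u - (x + 2 * y) / 3)))
     ((x + y) / 2) y).
- apply Rplus_le_compat; apply RInt_weight_le_chord; try lra; intros u Hu.
  + pose proof (pow2_ge_0 (u - (2 * x + y) / 3)). nra.
  + pose proof (pow2_ge_0 (u - (x + 2 * y) / 3)). nra.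
- unfold chord. rewrite !RInt_affine_mul. right. field. lra.
Qed.

End Chord.

Theorem corollary1 (x y : R) (f : R -> R) :
  x < y -> convex_on x y f ->
  3 / (y - x) ^ 2 * double_mid_int x y f
    <= 2 / (y - x) * RInt f x y + f ((x + y) / 2)
  /\
  4 / (y - x) * RInt f x y
    <= 3 / (y - x) ^ 2 * double_mid_int x y f + (f x + f y) / 2.
Proof.
intros Hxy Hf.
destruct (convex_on_continuous_extension x y f Hf Hxy) as [g [Hgf Hg]].
assert (Hint : RInt f x y = RInt g x y).
{ apply RInt_ext. intros u Hu. rewrite Rmin_left, Rmax_right in Hu by lra. now rewrite Hgf. }
assert (Hdouble : double_mid_int x y f = double_mid_int x y g).
{ unfold double_mid_int. apply RInt_ext. intros t Ht. apply RInt_ext. intros s Hs.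
  rewrite Rmin_left, Rmax_right in Ht, Hs by lra. rewrite Hgf; lra. }
rewrite Hint, Hdouble.
pose proof (double_mid_int_mid_split g x Hg y) as Hmid.
pose proof (double_mid_int_end_split g x Hg y) as Hend.
pose proof (RInt_mid_weights_le x y f Hf g Hg Hgf Hxy) as Hmid_le.
pose proof (RInt_end_weights_le x y f Hf g Hg Hgf Hxy) as Hend_le.
set (D := double_mid_int x y g) in *. set (I := RInt g x y) in *.
assert (HL : 0 < (y - x) ^ 2) by (apply pow_lt; lra).
split; apply (Rmult_le_reg_r ((y - x) ^ 2) _ _ HL).
- replace (3 / (y - x) ^ 2 * D * (y - x) ^ 2) with (3 * D) by (field; lra).
  replace ((2 / (y - x) * I + f ((x + y) / 2)) * (y - x) ^ 2)
    with (2 * (y - x) * I + (y - x) ^ 2 * f ((x + y) / 2)) by (field; lra).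
  lra.
- replace (4 / (y - x) * I * (y - x) ^ 2) with (4 * (y - x) * I) by (field; lra).
  replace ((3 / (y - x) ^ 2 * D + (f x + f y) / 2) * (y - x) ^ 2)
    with (3 * D + (y - x) ^ 2 * ((f x + f y) / 2)) by (field; lra).
  lra.
Qed.
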